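(* Let $\Delta=(\Gamma,\mathbf{R})$ be a theory such that $\bigcirc(B/A)\in\mathbf{R}^{\mathrm{o}}$, there is no $r\in\mathbf{R}^{\mathrm{o}}$ with $r\triangleright\bigcirc(B/A)$, and $\Diamond(A\wedge B)\in\Gamma$, where $A,B$ are Boolean formulas. Then $\Delta\mid\sim\bigcirc(B/A)$.
   Context: Boolean formulas over propositional letters; $\models_{\mathrm{PL}}$ classical entailment, $\models_{\mathrm{S5}}$ S5 entailment; $\Diamond A=\neg\Box\neg A$ and $w\models\Box A$ iff $A$ holds at all worlds. A theory is $\Delta=(\Gamma,\mathbf{R})$, $\Gamma$ a finite set of Boolean or alethic formulas, $\mathbf{R}=(\mathbf{R}^{\Rightarrow},\mathbf{R}^{\mathrm{o}})$, $\mathbf{R}^{\Rightarrow}$ a finite (coherent) set of normality conditionals and $\mathbf{R}^{\mathrm{o}}$ a finite set of obligations $\bigcirc(B/A)$ (body $b=A$, head $h=B$). Overriding (relative to $\Gamma$): $r_j\triangleright r_i$ iff (i) $\{h(r_i),h(r_j)\}\cup\Gamma\models_{\mathrm{S5}}\bot$; (ii) $b(r_j)\models_{\mathrm{PL}}b(r_i)$ and $b(r_i)\not\models_{\mathrm{PL}}b(r_j)$; (iii) $\{h(r_i),b(r_j)\}\not\models_{\mathrm{PL}}\bot$. An $\mathbf{R}$-ordered model is $(W,\succeq_N,\succeq_I,v)$ with $W\neq\emptyset$, valuation $v$, $\succeq_N$ the normality total preorder determined by $\mathbf{R}^{\Rightarrow}$ via the lexicographic ranking on falsified conditionals (coherence: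 no nonempty $X\subseteq\mathbf{R}^{\Rightarrow}$ has $\mathrm{m}(X)\models_{\mathrm{PL}}\bigwedge_{r\in X}\neg b(r)$, with $\mathrm{m}(X)=\{A\rightarrow B:A\Rightarrow B\in X\}$; $\mathcal{E}_0=\mathbf{R}^{\Rightarrow}$, $\mathcal{E}_{i+1}=\{A\Rightarrow B\in\mathbf{R}^{\Rightarrow}:\mathrm{m}(\mathcal{E}_i)\models_{\mathrm{PL}}\neg A\}$, $m$ the stabilization index, $\Delta_i=\mathcal{E}_i\setminus\mathcal{E}_{i+1}$, $\Delta_m=\mathcal{E}_m$; $w_1\succeq_N w_2$ iff $\langle|\Delta_{m-1}\cap F(w_1)|,\dots,|\Delta_0\cap F(w_1)|\rangle$ is lexicographically $\le$ that of $w_2$, where $F(w)$ is the set of conditionals in $\mathbf{R}^{\Rightarrow}$ whose body holds and head fails at $w$), and $w_1\succeq_I w_2$ iff $V(w_1)\subseteq V(w_2)$ where $V(w)=\{r_i\in\mathbf{R}^{\mathrm{o}}:w\models b(r_i)\wedge\neg h(r_i)$ and $w\not\models b(r_j)$ for all $r_j\in\mathbf{R}^{\mathrm{o}}$ with $r_j\triangleright r_i\}$. $\max_{\succeq}(X)=\{w\in X:\forall u\in X(u\succeq w\Rightarrow w\succeq u)\}$. Lifting: $U\succeq_I^{s}U'$ iff for every $u'\in U'$ there is $u\in U$ with $u\succeq_I u'$. Truth: $w\models\bigcirc(B/A)$ iff $\max_{\succeq_N}(\Vert A\wedge\neg B\Vert)\not\succeq_I^{s}\max_{\succeq_N}(\Vert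 A\wedge B\Vert)$. $\Delta\mid\sim\varphi$ iff in every $\mathbf{R}$-ordered model every world satisfying all of $\Gamma$ satisfies $\varphi$. *)

From Stdlib Require Import List Arith ClassicalDescription.
Import ListNotations.

Inductive form : Type :=
| Var : nat -> form
| Bot : form
| Neg : form -> form
| And : form -> form -> form
| Or  : form -> form -> form
| Imp : form -> form -> form
| Box : form -> form.

Definition Dia (f : form) : form := Neg (Box (Neg f)).

Fixpoint boolean (f : form) : Prop :=
  match f with
  | Var _ | Bot => True
  | Neg g => boolean g
  | And g h | Or g h | Imp g h => boolean g /\ boolean h
  | Box _ => False
  end.

Record cond : Type := Cond { cbody : form; chead : form }.
(* obligation  O(B/A) : body A, head B *)
Record obl : Type := Obl { obody : form; ohead : form }.
Definition OB (B A : form) : obl := Obl A B.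

Fixpoint peval (v : nat -> bool) (f : form) : Prop :=
  match f with
  | Var n => v n = true
  | Bot => False
  | Neg g => ~ peval v g
  | And g h => peval v g /\ peval v h
  | Or g h => peval v g \/ peval v h
  | Imp g h => peval v g -> peval v h
  | Box g => peval v g (* never used: PL entailment only on Boolean formulas *)
  end.

Definition PLent_set (S : form -> Prop) (g : form) : Prop :=
  forall v : nat -> bool, (forall f, S f -> peval v f) -> peval v g.
Definition PLent (l : list form) (g : form) : Prop :=
  PLent_set (fun f => In f l) g.

Fixpoint s5eval {W : Type} (val : W -> nat -> bool) (w : W) (f : form) : Prop :=
  match f with
  | Var n => val w n = true
  | Bot => False
  | Neg g => ~ s5eval val w g
  | And g h => s5eval val w g /\ s5eval val w h
  | Or g h => s5eval val w g \/ s5eval val w h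
  | Imp g h => s5eval val w g -> s5eval val w h
  | Box g => forall u : W, s5eval val u g
  end.

Definition S5_inconsistent (l : list form) : Prop :=
  forall (W : Type) (val : W -> nat -> bool) (w : W),
    ~ (forall f, In f l -> s5eval val w f).

(** * Overriding (relative to Gamma):  overrides Gamma rj ri  means  rj |> ri *)
Definition overrides (Gamma : list form) (rj ri : obl) : Prop :=
  S5_inconsistent ([ohead ri; ohead rj] ++ Gamma) /\
  (PLent [obody rj] (obody ri) /\ ~ PLent [obody ri] (obody rj)) /\
  ~ PLent [ohead ri; obody rj] Bot.

Definition coherent (Rn : list cond) : Prop :=
  ~ exists X : cond -> Prop,
      (forall r, X r -> In r Rn) /\ (exists r, X r) /\
      (forall v : nat -> bool,
         (forall r, X r -> peval v (Imp (cbody r) (chead r))) ->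
         forall r, X r -> peval v (Neg (cbody r))).

Fixpoint Epart (Rn : list cond) (i : nat) : cond -> Prop :=
  match i with
  | 0 => fun r => In r Rn
  | S k => fun r =>
      In r Rn /\
      PLent_set (fun f => exists r', Epart Rn k r' /\ f = Imp (cbody r') (chead r'))
                (Neg (cbody r))
  end.

Definition Dpart (Rn : list cond) (i : nat) (r : cond) : Prop :=
  Epart Rn i r /\ ~ Epart Rn (S i) r.

Definition stab_index (Rn : list cond) (m : nat) : Prop :=
  (forall r, Epart Rn (S m) r <-> Epart Rn m r) /\
  (forall k, k < m -> ~ (forall r, Epart Rn (S k) r <-> Epart Rn k r)).

Definition pdec (P : Prop) : bool :=
  if excluded_middle_informative P then true else false.

(* lexicographic <= on vectors <f (m-1), ..., f 0> *)
Fixpoint lexle (m : nat) (f g : nat -> nat) : Prop :=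
  match m with
  | 0 => True
  | S k => f k < g k \/ (f k = g k /\ lexle k f g)
  end.

Record model : Type := Model {
  world : Type;
  val   : world -> nat -> bool;
  geN   : world -> world -> Prop;
  geI   : world -> world -> Prop
}.

Definition holds (M : model) (w : world M) (f : form) : Prop := s5eval (val M) w f.

Definition falsified (M : model) (w : world M) (r : cond) : Prop :=
  holds M w (cbody r) /\ ~ holds M w (chead r).

Definition fcount (Rn : list cond) (M : model) (w : world M) (i : nat) : nat :=
  length (filter (fun r => pdec (Dpart Rn i r /\ falsified M w r)) Rn).

Definition Viol (Gamma : list form) (Ro : list obl) (M : model) (w : world M)
    (ri : obl) : Prop :=
  In ri Ro /\ holds M w (obody ri) /\ ~ holds M w (ohead ri) /\
  forall rj, In rj Ro -> overrides Gamma rj ri -> ~ holds M w (obody rj).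

Definition R_ordered (Gamma : list form) (Rn : list cond) (Ro : list obl)
    (M : model) : Prop :=
  inhabited (world M) /\
  (forall m, stab_index Rn m ->
     forall w1 w2, geN M w1 w2 <-> lexle m (fcount Rn M w1) (fcount Rn M w2)) /\
  (forall w1 w2, geI M w1 w2 <->
     (forall r, Viol Gamma Ro M w1 r -> Viol Gamma Ro M w2 r)).

Definition maxset {W : Type} (ge : W -> W -> Prop) (X : W -> Prop) : W -> Prop :=
  fun w => X w /\ forall u, X u -> ge u w -> ge w u.

Definition lift_ge {W : Type} (ge : W -> W -> Prop) (U U' : W -> Prop) : Prop :=
  forall u', U' u' -> exists u, U u /\ ge u u'.

Definition sat_obl (M : model) (w : world M) (o : obl) : Prop :=
  ~ lift_ge (geI M)
      (maxset (geN M) (fun u => holds M u (And (obody o) (Neg (ohead o)))))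
      (maxset (geN M) (fun u => holds M u (And (obody o) (ohead o)))).

Definition nm_entails_obl (Gamma : list form) (Rn : list cond) (Ro : list obl)
    (o : obl) : Prop :=
  forall M : model, R_ordered Gamma Rn Ro M ->
    forall w : world M, (forall f, In f Gamma -> holds M w f) -> sat_obl M w o.

Definition theory_wf (Gamma : list form) (Rn : list cond) (Ro : list obl) : Prop :=
  NoDup Rn /\ NoDup Ro /\
  (forall r, In r Rn -> boolean (cbody r) /\ boolean (chead r)) /\
  (forall r, In r Ro -> boolean (obody r) /\ boolean (ohead r)) /\
  coherent Rn.

From Stdlib Require Import List Arith Lia Classical ClassicalDescription Wf_nat.

(* The premise [Dia (A /\ B)] makes ||A /\ B|| nonempty.  The normality
   preorder compares worlds lexicographically by finitely many natural counts,
   so it is well-founded and ||A /\ B|| has a normality-maximal world [w]; the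
   stabilization index it is relative to exists because E_0, E_1, ... is a
   decreasing chain of subsets of the finite list of conditionals.  Every world
   [u] of ||A /\ ~B|| violates O(B/A), and as no obligation overrides O(B/A), it
   lies in V(u) but not in V(w).  Hence no such [u] is ideality-above [w], and
   the lifting fails at [w], which is exactly the truth condition of O(B/A). *)

Lemma exists_least_nat (P : nat -> Prop) :
  (exists n, P n) -> exists n, P n /\ forall k, P k -> n <= k.
Proof.
  intro HP.
  destruct (dec_inh_nat_subset_has_unique_least_element P (fun n => classic (P n)) HP)
    as [n [Hn _]].
  exists n; exact Hn.
Qed.

Lemma lexle_min_exists {W : Type} (m : nat) (f : W -> nat -> nat) (X : W -> Prop) :
  (exists w, X w) -> exists w, X w /\ forall u, X u -> lexle m (f w) (f u).
Proof.
  revert X; induction m as [|k IH]; intros X [w0 Xw0].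
  - exists w0; split; [exact Xw0 | intros; exact I].
  - destruct (exists_least_nat (fun n => exists w, X w /\ f w k = n)) as [n [Hn Hleast]];
      [eauto|].
    destruct (IH (fun u => X u /\ f u k = n) Hn) as [w [[Xw Hw] Hmin]].
    exists w; split; [exact Xw|].
    intros u Xu; simpl.
    destruct (Nat.eq_dec (f u k) n) as [E|E].
    + right; split; [congruence | apply Hmin; auto].
    + left. assert (n <= f u k) by (apply Hleast; eauto). lia.
Qed.

Lemma filter_length_le_incl {T : Type} (p q : T -> bool) (l : list T) :
  (forall x, In x l -> q x = true -> p x = true) ->
  length (filter q l) <= length (filter p l).
Proof.
  induction l as [|a l IH]; intros Hqp; simpl; [lia|].
  specialize (IH (fun x Hx => Hqp x (or_intror Hx))).
  destruct (q a) eqn:Hq.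
  - rewrite (Hqp a (or_introl eq_refl) Hq); simpl; lia.
  - destruct (p a); simpl; lia.
Qed.

Lemma filter_length_lt_incl {T : Type} (p q : T -> bool) (l : list T) :
  (forall x, In x l -> q x = true -> p x = true) ->
  (exists x, In x l /\ p x = true /\ q x = false) ->
  length (filter q l) < length (filter p l).
Proof.
  induction l as [|a l IH]; intros Hqp [x [Hx [Hpx Hqx]]]; [destruct Hx|].
  assert (Hqp' : forall y, In y l -> q y = true -> p y = true)
    by (intros; apply Hqp; simpl; auto).
  simpl; destruct Hx as [<-|Hx].
  - rewrite Hpx, Hqx; simpl.
    pose proof (filter_length_le_incl p q l Hqp'); lia.
  - specialize (IH Hqp' (ex_intro _ x (conj Hx (conj Hpx Hqx)))).
    destruct (q a) eqn:Hq.
    + rewrite (Hqp a (or_introl eq_refl) Hq); simpl; lia.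
    + destruct (p a); simpl; lia.
Qed.

Lemma pdec_true (P : Prop) : pdec P = true <-> P.
Proof. unfold pdec; destruct (excluded_middle_informative P); intuition congruence. Qed.

Lemma pdec_false (P : Prop) : pdec P = false <-> ~ P.
Proof. unfold pdec; destruct (excluded_middle_informative P); intuition congruence. Qed.

Lemma Epart_in Rn k r : Epart Rn k r -> In r Rn.
Proof. destruct k; simpl; tauto. Qed.

Lemma Epart_succ Rn k r : Epart Rn (S k) r -> Epart Rn k r.
Proof.
  revert r; induction k as [|k IH]; intros r [Hin Hent]; [exact Hin|].
  split; [exact Hin|].
  intros v Hv; apply Hent.
  intros f [r' [Hr' ->]]; apply Hv; eauto.
Qed.

Lemma stab_index_exists Rn : exists m, stab_index Rn m.
Proof.
  set (stable := fun k => forall r, Epart Rn (S k) r <-> Epart Rn k r).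
  set (size := fun k => length (filter (fun r => pdec (Epart Rn k r)) Rn)).
  assert (Hshrink : forall k, ~ stable k -> size (S k) < size k).
  { intros k Hk; apply filter_length_lt_incl.
    - intros r _ Hr; apply pdec_true, Epart_succ, pdec_true, Hr.
    - destruct (not_all_ex_not _ _ Hk) as [r Hr].
      assert (Hdrop : Epart Rn k r /\ ~ Epart Rn (S k) r)
        by (pose proof (Epart_succ Rn k r); tauto).
      exists r; split; [apply (Epart_in Rn k), Hdrop|].
      split; [apply pdec_true | apply pdec_false]; apply Hdrop. }
  assert (Hstable : exists k, stable k).
  { destruct (exists_least_nat (fun n => exists k, size k = n)) as [n [[k <-] Hleast]];
      [exists (size 0), 0; reflexivity|].
    exists k; apply NNPP; intro Hk.
    specialize (Hleast (size (S k)) (ex_intro _ _ eq_refl)).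
    specialize (Hshrink k Hk); lia. }
  destruct (exists_least_nat stable Hstable) as [m [Hm Hleast]].
  exists m; split; [exact Hm|].
  intros k Hk Hsk; specialize (Hleast k Hsk); lia.
Qed.

Lemma R_ordered_maxset_exists Gamma Rn Ro (M : model) (X : world M -> Prop) :
  R_ordered Gamma Rn Ro M -> (exists u, X u) -> exists w, maxset (geN M) X w.
Proof.
  intros [_ [HN _]] HX.
  destruct (stab_index_exists Rn) as [m Hm].
  destruct (lexle_min_exists m (fcount Rn M) X HX) as [w [Xw Hmin]].
  exists w; split; [exact Xw|].
  intros u Xu _; apply (HN m Hm), Hmin, Xu.
Qed.

Lemma holds_Dia (M : model) (w : world M) (f : form) :
  holds M w (Dia f) -> exists u, holds M u f.
Proof.
  intro Hw; apply NNPP; intro Hnone.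
  apply Hw; intros u Hu; apply Hnone; exists u; exact Hu.
Qed.

Lemma Viol_unoverridden Gamma Ro (M : model) (u : world M) (o : obl) :
  In o Ro -> (forall r, In r Ro -> ~ overrides Gamma r o) ->
  holds M u (obody o) -> ~ holds M u (ohead o) -> Viol Gamma Ro M u o.
Proof.
  intros Ho Hnov Hb Hh; repeat split; auto.
  intros rj Hrj Hov; contradiction (Hnov rj Hrj Hov).
Qed.

Theorem proposition7 (Gamma : list form) (Rn : list cond) (Ro : list obl)
    (A B : form) :
  theory_wf Gamma Rn Ro ->
  boolean A -> boolean B ->
  In (OB B A) Ro ->
  (forall r, In r Ro -> ~ overrides Gamma r (OB B A)) ->
  In (Dia (And A B)) Gamma ->
  nm_entails_obl Gamma Rn Ro (OB B A).
Proof.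
  intros _ _ _ Hin Hnov Hdia M HM w HGamma Hlift.
  destruct (R_ordered_maxset_exists Gamma Rn Ro M _ HM
              (holds_Dia M w _ (HGamma _ Hdia))) as [wAB HwAB].
  destruct (Hlift wAB HwAB) as [u [[[HuA HunB] _] Hge]].
  assert (Hviol : Viol Gamma Ro M u (OB B A))
    by (apply Viol_unoverridden; assumption).
  destruct HM as [_ [_ HI]].
  destruct (proj1 (HI u wAB) Hge _ Hviol) as [_ [_ [HnB _]]].
  apply HnB, HwAB.
Qed.
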